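(* Let $I$ be a monomial ideal of $T=\Bbbk[\alpha_1,\alpha_2]$ with $\dim_\Bbbk T/I=r<\infty$. Then \[\dim_\Bbbk\operatorname{Hom}_T(I,T/I)_{>0}=\sum_{\mathbf{u}\in M_I}\sum_{a>|\mathbf{u}|}\lambda_I(a)-\sum_{\mathbf{u}\in R_I}\sum_{a>|\mathbf{u}|}\lambda_I(a).\] Equivalently, $\dim_\Bbbk\operatorname{Hom}_T(I,T/I)_{>0}=\sum_{c}\big(\beta_{1,c}(T/I)-\beta_{2,c}(T/I)\big)\sum_{a>c}\lambda_I(a)$.
   Context: $\Bbbk$ algebraically closed, $T$ standard graded; $\operatorname{Hom}_T(I,T/I)_{>0}=\bigoplus_{d>0}\operatorname{Hom}_T(I,T/I)_d$ where $\operatorname{Hom}_T(I,T/I)_d$ consists of homomorphisms raising degree by $d$. Monomials $\alpha_1^s\alpha_2^t$ are identified with lattice points $(s,t)$, and $|(s,t)|=s+t$. Write the minimal monomial generators of $I$ as $\alpha_1^{a_0},\alpha_1^{a_1}\alpha_2^{b_1},\ldots,\alpha_1^{a_{m-1}}\alpha_2^{b_{m-1}},\alpha_2^{b_m}$ with $a_0>a_1>\cdots>a_{m-1}>a_m=0$ and $0=b_0<b_1<\cdots<b_m$. $M_I=\{(a_i,b_i):0\le i\le m\}$ is the set of exponents of minimal generators, and $R_I=\{(a_{i-1},b_i):1\leq i\leq m\}$ is the set of multidegrees of the minimal syzygies (lcm's of consecutive generators). $\lambda_I(a)$ is the number of monomials of degree $a$ not in $I$. $\beta_{i,c}$ are graded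 Betti numbers. *)

From HB Require Import structures.
From mathcomp Require Import all_boot all_order all_algebra.
From mathcomp Require Import mpoly.

Set Implicit Arguments.
Unset Strict Implicit.
Unset Printing Implicit Defensive.

Import Order.TTheory GRing.Theory.
Local Open Scope ring_scope.

Section MonomialIdeal.

(* The monomial ideal I is given by its minimal monomial generators
   alpha_1^(a i) alpha_2^(b i), 0 <= i <= m, with
   a 0 > a 1 > ... > a m = 0 and 0 = b 0 < b 1 < ... < b m
   (these conditions are hypotheses of the main theorem). *)
Variables (k : fieldType) (m : nat) (a b : nat -> nat).

Definition T := {mpoly k[2]}.

Definition alpha1 : T := 'X_(ord0 : 'I_2).
Definition alpha2 : T := 'X_(ord_max : 'I_2).

Definition mono (s t : nat) : T := alpha1 ^+ s * alpha2 ^+ t.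

Definition inI (p : T) : Prop :=
  exists q : nat -> T, p = \sum_(i < m.+1) q i * mono (a i) (b i).

Definition congI (p q : T) : Prop := inI (p - q).

(* A map phi : I -> T/I, represented by a function T -> T whose values
   on I are representatives of classes in T/I (values outside I are
   irrelevant); it is a T-module homomorphism. *)
Definition isHom (phi : T -> T) : Prop :=
  (forall p q, inI p -> inI q -> congI (phi (p + q)) (phi p + phi q)) /\
  (forall c p, inI p -> congI (phi (c * p)) (c * phi p)).

Definition isHomDeg (d : nat) (phi : T -> T) : Prop :=
  isHom phi /\
  (forall (e : nat) (p : T), inI p -> p \is e.-homog ->
     exists q : T, q \is (e + d)%N.-homog /\ congI (phi p) q).

Definition isHomPos (phi : T -> T) : Prop :=
  exists (D : nat) (psi : nat -> T -> T),
    (forall d, isHomDeg d.+1 (psi d)) /\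
    (forall p, inI p -> congI (phi p) (\sum_(d < D) psi d p)).

(* the k-vector space of (classes of) maps in S, where two maps are
   identified when they agree in T/I on every element of I, has
   dimension n over k. *)
Definition hasdimI (S : (T -> T) -> Prop) (n : nat) : Prop :=
  exists f : 'I_n -> T -> T,
    (forall i, S (f i)) /\
    (forall c : 'I_n -> k,
        (forall p, inI p -> congI (\sum_(i < n) c i *: f i p) 0) ->
        forall i, c i = 0) /\
    (forall phi, S phi ->
       exists c : 'I_n -> k,
         forall p, inI p -> congI (phi p) (\sum_(i < n) c i *: f i p)).

Definition monoInI (s t : nat) : bool :=
  [exists i : 'I_m.+1, (a i <= s)%N && (b i <= t)%N].

Definition lambdaI (x : nat) : nat :=
  #|[set s : 'I_x.+1 | ~~ monoInI s (x - s)]|.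

(* \sum_{x > u} lambda_I(x); lambda_I(x) = 0 for x >= a 0 + b m,
   so the sum is truncated there. *)
Definition tailI (u : nat) : nat :=
  (\sum_(u.+1 <= x < a 0 + b m) lambdaI x)%N.

(* sum over M_I = {(a i, b i) : 0 <= i <= m} *)
Definition sumM : nat := (\sum_(i < m.+1) tailI (a i + b i))%N.

(* sum over R_I = {(a (i-1), b i) : 1 <= i <= m} *)
Definition sumR : nat := (\sum_(i < m) tailI (a i + b i.+1))%N.

End MonomialIdeal.

From Pilot Require Import Defs.
From HB Require Import structures.
From mathcomp Require Import all_boot all_order all_algebra.
From mathcomp Require Import mpoly.
From mathcomp Require Import zify ring.

(* Write g_i = alpha_1^(a i) alpha_2^(b i) for the minimal generators of I and
   call a monomial standard when it is not in I.  A homomorphism phi : I -> T/I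
   is determined by the classes phi(g_i), i.e. by the coefficients w(i,s,t) of
   phi(g_i) on the standard monomials alpha_1^s alpha_2^t; in positive degree
   only the coefficients with s + t > |g_i| can be nonzero.  These form a
   space W with dim W = sum over M_I of the tails of lambda_I.  The only
   relations come from the syzygies alpha_2^(b(i+1)-b i) g_i =
   alpha_1^(a i-a(i+1)) g_(i+1): they define a linear map syz : W -> U into
   a space U of dimension the sum over R_I of the tails of lambda_I, and
   Phi : ker syz -> Hom_T(I,T/I)_{>0} is an isomorphism.  Finally syz is
   surjective, so the dimension is dim W - dim U. *)

Set Implicit Arguments.
Unset Strict Implicit.
Unset Printing Implicit Defensive.
Import Order.TTheory GRing.Theory.

Lemma sum_triangle_antidiag (F : nat -> nat -> nat) N :
  \sum_(0 <= s < N) \sum_(0 <= t < N - s) F s t =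
  \sum_(0 <= x < N) \sum_(0 <= s < x.+1) F s (x - s).
Proof.
elim: N => [|N IH]; first by rewrite !big_geq.
rewrite big_nat_recr //= [RHS]big_nat_recr //= -IH.
rewrite [in RHS]big_nat_recr //= subnn.
have -> : \sum_(0 <= s < N) \sum_(0 <= t < N.+1 - s) F s t =
          \sum_(0 <= s < N) (\sum_(0 <= t < N - s) F s t + F s (N - s)).
  apply: eq_big_nat => s /andP [_ Hs].
  by rewrite subSn ?(ltnW Hs) // big_nat_recr.
by rewrite big_split /= subSnn big_nat1 addnA.
Qed.

Lemma sum_square_triangle (F : nat -> nat -> nat) N :
  (forall s t, N <= s + t -> F s t = 0) ->
  \sum_(0 <= s < N) \sum_(0 <= t < N) F s t =
  \sum_(0 <= s < N) \sum_(0 <= t < N - s) F s t.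
Proof.
move=> HF; apply: eq_big_nat => s /andP [_ Hs].
rewrite (big_cat_nat (n := N - s)) ?leq_subr //= [X in _ + X]big1_seq ?addn0 //.
move=> t /andP [_]; rewrite mem_index_iota => /andP [Ht _]; apply: HF; lia.
Qed.

Section Staircase.
Variables (m : nat) (a b : nat -> nat).
Hypothesis ha_dec : forall i, i < m -> a i.+1 < a i.
Hypothesis ha_last : a m = 0.
Hypothesis hb_first : b 0 = 0.
Hypothesis hb_inc : forall i, i < m -> b i < b i.+1.

Lemma a_le i j : i <= j -> j <= m -> a j <= a i.
Proof.
move=> Hij Hjm; elim: j Hij Hjm => [|j IH]; first by rewrite leqn0 => /eqP ->.
rewrite leq_eqVlt => /orP [/eqP -> //|Hij] Hjm.
exact: leq_trans (ltnW (ha_dec Hjm)) (IH Hij (ltnW Hjm)).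
Qed.

Lemma b_le i j : i <= j -> j <= m -> b i <= b j.
Proof.
move=> Hij Hjm; elim: j Hij Hjm => [|j IH]; first by rewrite leqn0 => /eqP ->.
rewrite leq_eqVlt => /orP [/eqP -> //|Hij] Hjm.
exact: leq_trans (IH Hij (ltnW Hjm)) (ltnW (hb_inc Hjm)).
Qed.

Definition std (s t : nat) : bool := ~~ monoInI m a b s t.

Lemma std_mono s t s' t' : std s t -> s' <= s -> t' <= t -> std s' t'.
Proof.
move=> H Hs Ht; apply/negP => /existsP [i /andP [H1 H2]].
move/negP: H; apply; apply/existsP; exists i.
by rewrite (leq_trans H1 Hs) (leq_trans H2 Ht).
Qed.

(* alpha_1^(a 0) and alpha_2^(b m) lie in I, so standard monomials lie in a
   box; all our index sets are bounded by its side [box]. *)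
Lemma std_bound s t : std s t -> s < a 0 /\ t < b m.
Proof.
move=> H; split; rewrite ltnNge; apply/negP => Hle; move/negP: H; apply;
  apply/existsP.
  by exists ord0; rewrite /= Hle hb_first.
by exists ord_max; rewrite /= Hle ha_last.
Qed.

Definition box : nat := a 0 + b m.

Lemma lambdaE x : lambdaI m a b x = \sum_(0 <= s < x.+1) std s (x - s).
Proof.
rewrite /lambdaI cardsE -sum1_card big_mkcond /= big_mkord.
by apply: eq_bigr => s _; rewrite unfold_in /std; case: (monoInI _ _ _ _ _).
Qed.

Lemma count_tail u :
  \sum_(s < box) \sum_(t < box) (std s t && (u < s + t)) = tailI m a b u.
Proof.
have -> : \sum_(s < box) \sum_(t < box) (std s t && (u < s + t)) =
          \sum_(0 <= s < box) \sum_(0 <= t < box) (std s t && (u < s + t)).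
  by rewrite big_mkord; apply: eq_bigr => s _; rewrite big_mkord.
rewrite sum_square_triangle; last first.
  move=> s t Hst; case Hs: (std s t) => //=.
  have [H1 H2] := std_bound Hs; move: Hst; rewrite /box; lia.
rewrite sum_triangle_antidiag /tailI.
have -> : \sum_(0 <= x < box) \sum_(0 <= s < x.+1)
            (std s (x - s) && (u < s + (x - s))) =
          \sum_(0 <= x < box) ((u < x) * lambdaI m a b x).
  apply: eq_big_nat => x _; rewrite lambdaE big_distrr /=.
  apply: eq_big_nat => s /andP [_ Hs].
  have -> : s + (x - s) = x by lia.
  by case: (std _ _); case: (u < x).
case: (leqP u.+1 box) => Hu.
  rewrite (big_cat_nat (n := u.+1)) //= big1_seq ?add0n.
    by apply: eq_big_nat => x /andP [Hx _]; rewrite Hx mul1n.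
  move=> x /andP [_]; rewrite mem_index_iota => /andP [_ Hx].
  by rewrite ltnNge -ltnS Hx.
rewrite [RHS]big_geq ?(ltnW Hu) // big1_seq // => x /andP [_].
by rewrite mem_index_iota => /andP [_ Hx]; have -> : u < x = false by lia.
Qed.

End Staircase.

Section FiniteCoordinates.
Variables (k : fieldType) (n B : nat) (P : nat -> nat -> nat -> bool).
Hypothesis HP : forall i s t, P i s t -> [/\ i < n, s < B & t < B].
Local Open Scope ring_scope.

Definition Idx := {x : 'I_n * 'I_B * 'I_B | P x.1.1 x.1.2 x.2}.

Definition idx (x : Idx) : nat * nat * nat :=
  (nat_of_ord (val x).1.1, nat_of_ord (val x).1.2, nat_of_ord (val x).2).

Lemma idx_inj : injective idx.
Proof.
move=> [[[i s] t] Hx] [[[i' s'] t'] Hx'] /= [E1 E2 E3].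
by apply: val_inj => /=; rewrite (ord_inj E1) (ord_inj E2) (ord_inj E3).
Qed.

Lemma idx_P x : P (idx x).1.1 (idx x).1.2 (idx x).2.
Proof. exact: (valP x). Qed.

Lemma idx_ex i s t : P i s t -> exists x, idx x = (i, s, t).
Proof.
move=> H; have [Hi Hs Ht] := HP H.
by exists (exist _ (Ordinal Hi, Ordinal Hs, Ordinal Ht) H).
Qed.

Lemma card_Idx :
  #|{: Idx}| = (\sum_(i < n) \sum_(s < B) \sum_(t < B) (P i s t : nat))%N.
Proof.
rewrite /Idx card_sig -(sum1_card [pred x : 'I_n * 'I_B * 'I_B |
  P x.1.1 x.1.2 x.2]) big_mkcond /= [RHS]pair_bigA [RHS]pair_bigA /=.
by apply: eq_bigr => [[[i s] t]] _ /=; rewrite inE; case: (P _ _ _).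
Qed.

Definition V := {ffun Idx -> k^o}.

Lemma dimV : \dim (fullv : {vspace V}) = #|{: Idx}|.
Proof. by rewrite dimvf /dim /= muln1. Qed.

Definition entry (w : V) (i s t : nat) : k :=
  \sum_(x : Idx | idx x == (i, s, t)) w x.

Lemma entry_id w x i s t : idx x = (i, s, t) -> entry w i s t = w x.
Proof.
move=> H; rewrite /entry (big_pred1 x) // => y /=.
by rewrite -H; apply/eqP/eqP => [/idx_inj //|-> //].
Qed.

Lemma entry_out w i s t : ~~ P i s t -> entry w i s t = 0.
Proof.
move=> H; rewrite /entry big_pred0 // => y; apply/negP => /eqP E.
by move: (idx_P y); rewrite E => Hy; rewrite Hy in H.
Qed.

Lemma entry_lin (c : k) w w' i s t :
  entry (c *: w + w') i s t = c * entry w i s t + entry w' i s t.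
Proof.
rewrite /entry mulr_sumr -big_split /=; apply: eq_bigr => x _.
by rewrite !ffunE.
Qed.

Definition delta (i s t : nat) : V := [ffun x => (idx x == (i, s, t))%:R].

Lemma entry_delta i s t i' s' t' :
  entry (delta i s t) i' s' t' = (P i' s' t' && ((i', s', t') == (i, s, t)))%:R.
Proof.
case HP' : (P i' s' t'); last by rewrite entry_out ?HP'.
by have [x Hx] := idx_ex HP'; rewrite (entry_id _ Hx) ffunE Hx.
Qed.

Lemma delta_out i s t : ~~ P i s t -> delta i s t = 0.
Proof.
move=> H; apply/ffunP => x; rewrite !ffunE; case: eqP => // E.
by move: (idx_P x); rewrite E => Hy; rewrite Hy in H.
Qed.

Lemma V_decomp (u : V) : u = \sum_(x : Idx) u x *: delta (idx x).1.1 (idx x).1.2 (idx x).2.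
Proof.
have idxE z : ((idx z).1.1, (idx z).1.2, (idx z).2) = idx z by case: (idx z) => [[]].
apply/ffunP => y; rewrite sum_ffunE (bigD1 y) //= big1 ?addr0.
  by rewrite !ffunE idxE eqxx; exact: (esym (mulr1 _)).
move=> x Hx; rewrite !ffunE idxE.
by rewrite (inj_eq idx_inj) eq_sym (negPf Hx) scaler0.
Qed.

End FiniteCoordinates.

Local Open Scope ring_scope.

Lemma mcoeffMX_cond (R : nzRingType) n (p : {mpoly R[n]}) (g nu : 'X_{1..n}) :
  (p * 'X_[g])@_nu = if (g <= nu)%MM then p@_(nu - g) else 0.
Proof.
case: ifP => Hg; first by rewrite -{1}(submK Hg) addmC mcoeffMX.
apply: memN_msupp_eq0; rewrite (perm_mem (msuppMX _ _)).
by apply/mapP => -[m' _ Hm]; move/negbT: Hg; rewrite Hm lem_addr.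
Qed.

Section MonomialIdeal.
Variables (k : fieldType) (m : nat) (a b : nat -> nat).
Hypothesis ha_dec : forall i, (i < m)%N -> (a i.+1 < a i)%N.
Hypothesis ha_last : a m = 0%N.
Hypothesis hb_first : b 0%N = 0%N.
Hypothesis hb_inc : forall i, (i < m)%N -> (b i < b i.+1)%N.

Local Notation T := (T k).
Local Notation inI := (@inI k m a b).
Local Notation congI := (@congI k m a b).
Local Notation mono := (@mono k).
Local Notation isHom := (@isHom k m a b).
Local Notation isHomDeg := (@isHomDeg k m a b).
Local Notation isHomPos := (@isHomPos k m a b).
Local Notation std := (std m a b).
Local Notation std_bound := (std_bound ha_last hb_first).
Local Notation box := (box m a b).

Definition var1 : 'I_2 := ord0.
Definition var2 : 'I_2 := ord_max.

Lemma I2_cases (i : 'I_2) : i = var1 \/ i = var2.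
Proof. by case: i => [[|[|n]] Hi]; [left|right|by []]; apply/val_inj. Qed.

Definition mexp (s t : nat) : 'X_{1..2} :=
  [multinom (if i == var1 then s else t) | i < 2].

Lemma mexp1 s t : mexp s t var1 = s. Proof. by rewrite mnmE eqxx. Qed.
Lemma mexp2 s t : mexp s t var2 = t. Proof. by rewrite mnmE. Qed.

Lemma mexpE (mu : 'X_{1..2}) : mu = mexp (mu var1) (mu var2).
Proof. by apply/mnmP => i; case: (I2_cases i) => ->; rewrite ?mexp1 ?mexp2. Qed.

Lemma mexp_eq s t (nu : 'X_{1..2}) :
  (mexp s t == nu) = (s == nu var1) && (t == nu var2).
Proof.
apply/eqP/andP => [<-|[/eqP -> /eqP ->]]; first by rewrite mexp1 mexp2.
by rewrite -mexpE.
Qed.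

Lemma mexpD s t s' t' : (mexp s t + mexp s' t')%MM = mexp (s + s') (t + t').
Proof.
by apply/mnmP => i; rewrite mnmDE; case: (I2_cases i) => ->; rewrite !(mexp1, mexp2).
Qed.

Lemma mexpB s t s' t' : (mexp s t - mexp s' t')%MM = mexp (s - s') (t - t').
Proof.
by apply/mnmP => i; rewrite mnmBE; case: (I2_cases i) => ->; rewrite !(mexp1, mexp2).
Qed.

Lemma lemP (mu nu : 'X_{1..2}) :
  (mu <= nu)%MM = (mu var1 <= nu var1)%N && (mu var2 <= nu var2)%N.
Proof.
apply/mnm_lepP/andP => [H|[H1 H2] i]; first by split; apply: H.
by case: (I2_cases i) => ->.
Qed.

Lemma mdeg2 (mu : 'X_{1..2}) : mdeg mu = (mu var1 + mu var2)%N.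
Proof.
rewrite mdegE big_ord_recr /= big_ord_recr /= big_ord0 add0n.
by congr (_ + _)%N; congr (mu _); apply/val_inj.
Qed.

Lemma monoX s t : mono s t = 'X_[mexp s t].
Proof.
rewrite /Defs.mono /alpha1 /alpha2 !mpolyXn -mpolyXD; congr 'X_[_].
apply/mnmP => i; rewrite mnmDE !mulmnE !mnm1E.
by case: (I2_cases i) => ->; rewrite ?mexp1 ?mexp2 /= mul1n mul0n ?addn0 ?add0n.
Qed.

Lemma coefXmul (f : T) s0 t0 s t :
  ('X_[mexp s0 t0] * f)@_(mexp s t) =
  if ((s0 <= s) && (t0 <= t))%N then f@_(mexp (s - s0) (t - t0)) else 0.
Proof. by rewrite mulrC mcoeffMX_cond lemP !mexp1 !mexp2 mexpB. Qed.

Lemma coef_box (c : nat -> nat -> k) (nu : 'X_{1..2}) :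
  (nu var1 < box)%N -> (nu var2 < box)%N ->
  (\sum_(s < box) \sum_(t < box) c s t *: ('X_[mexp s t] : T))@_nu =
  c (nu var1) (nu var2).
Proof.
move=> H1 H2; rewrite raddf_sum /= (bigD1 (Ordinal H1)) //= [X in _ + X]big1 ?addr0.
  rewrite raddf_sum /= (bigD1 (Ordinal H2)) //= [X in _ + X]big1 ?addr0.
    by rewrite mcoeffZ mcoeffX mexp_eq !eqxx mulr1.
  move=> t Ht; rewrite mcoeffZ mcoeffX mexp_eq eqxx /=.
  by rewrite -(inj_eq val_inj) /= in Ht; rewrite (negPf Ht) mulr0.
move=> s Hs; rewrite raddf_sum /= big1 // => t _; rewrite mcoeffZ mcoeffX mexp_eq.
by rewrite -(inj_eq val_inj) /= in Hs; rewrite (negPf Hs) mulr0.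
Qed.

Lemma inI0 : inI 0.
Proof. by exists (fun _ => 0); rewrite big1 // => i _; rewrite mul0r. Qed.

Lemma inID p q : inI p -> inI q -> inI (p + q).
Proof.
move=> [f ->] [g ->]; exists (fun i => f i + g i).
by rewrite -big_split /=; apply: eq_bigr => i _; rewrite mulrDl.
Qed.

Lemma inIM c p : inI p -> inI (c * p).
Proof.
move=> [f ->]; exists (fun i => c * f i).
by rewrite mulr_sumr; apply: eq_bigr => i _; rewrite mulrA.
Qed.

Lemma inIN p : inI p -> inI (- p).
Proof. by move=> H; rewrite -mulN1r; apply: inIM. Qed.

Lemma inIZ (c : k) p : inI p -> inI (c *: p).
Proof. by move=> H; rewrite -mul_mpolyC; apply: inIM. Qed.

Lemma inI_sum (I : Type) (r : seq I) (P : pred I) (F : I -> T) :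
  (forall i, P i -> inI (F i)) -> inI (\sum_(i <- r | P i) F i).
Proof. by move=> H; elim/big_ind: _ => //; [exact: inI0 | exact: inID]. Qed.

Lemma inIgen i : (i <= m)%N -> inI (mono (a i) (b i)).
Proof.
move=> Hi; exists (fun j => ((j == i :> nat)%:R : T)).
rewrite (bigD1 (Ordinal (Hi : (i < m.+1)%N))) //= eqxx mul1r big1 ?addr0 //.
by move=> j /negPf Hj; rewrite -(inj_eq val_inj) /= in Hj; rewrite Hj mul0r.
Qed.

Definition gexp (i : nat) : 'X_{1..2} := mexp (a i) (b i).

Lemma gexp_le i (xi : 'X_{1..2}) :
  (gexp i <= xi)%MM = (a i <= xi var1)%N && (b i <= xi var2)%N.
Proof. by rewrite lemP /gexp mexp1 mexp2. Qed.

Definition stdm (mu : 'X_{1..2}) : bool := std (mu var1) (mu var2).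

Lemma nstdmP mu :
  reflect (exists2 i, (i <= m)%N & (gexp i <= mu)%MM) (~~ stdm mu).
Proof.
rewrite negbK; apply: (iffP existsP) => [[i /andP [H1 H2]]|[i Hi]].
  by exists i; rewrite ?gexp_le ?H1 // -ltnS.
by rewrite gexp_le => Hle; exists (Ordinal (Hi : (i < m.+1)%N)).
Qed.

(* Membership in I is decided by the coefficients on standard monomials:
   a monomial ideal is spanned by the monomials it contains. *)
Lemma inI_coef_std p mu : inI p -> stdm mu -> p@_mu = 0.
Proof.
move=> [f ->] Hs; rewrite raddf_sum /= big1 // => i _.
rewrite monoX mcoeffMX_cond; case: ifP => // Hle.
by exfalso; move: Hs; apply/negP/nstdmP; exists i; rewrite // -ltnS.
Qed.

Lemma coef_std_inI p : (forall mu, stdm mu -> p@_mu = 0) -> inI p.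
Proof.
move=> H; rewrite (mpolyE p) big_seq; apply: inI_sum => mu Hmu; apply: inIZ.
have /nstdmP [i Hi Hle] : ~~ stdm mu.
  by apply/negP => /H /eqP; rewrite mcoeff_eq0 Hmu.
by rewrite -(submK Hle) mpolyXD -monoX; exact: inIM (inIgen Hi).
Qed.

Lemma congI_coef p q mu : congI p q -> stdm mu -> p@_mu = q@_mu.
Proof. by move=> H /(inI_coef_std H) /eqP; rewrite mcoeffB subr_eq0 => /eqP. Qed.

Lemma coef_congI p q : (forall mu, stdm mu -> p@_mu = q@_mu) -> congI p q.
Proof.
by move=> H; apply: coef_std_inI => mu /H; rewrite mcoeffB => ->; rewrite subrr.
Qed.

Lemma congI_refl p : congI p p.
Proof. by rewrite /congI subrr; apply: inI0. Qed.

Lemma congI_sym p q : congI p q -> congI q p.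
Proof. by rewrite /congI => H; rewrite -opprB; apply: inIN. Qed.

Lemma congI_trans p q r : congI p q -> congI q r -> congI p r.
Proof.
rewrite /congI => H1 H2.
have -> : p - r = (p - q) + (q - r) by rewrite addrA subrK.
exact: inID.
Qed.

Lemma congI_add p q p' q' : congI p q -> congI p' q' -> congI (p + p') (q + q').
Proof.
rewrite /congI => H1 H2.
have -> : p + p' - (q + q') = (p - q) + (p' - q') by rewrite opprD addrACA.
exact: inID.
Qed.

Lemma congI_mul c p q : congI p q -> congI (c * p) (c * q).
Proof. by rewrite /congI -mulrBr; apply: inIM. Qed.

Lemma congI_scale (c : k) p q : congI p q -> congI (c *: p) (c *: q).
Proof. by rewrite /congI -scalerBr; apply: inIZ. Qed.

Lemma congI_sum (I : Type) (r : seq I) (P : pred I) (F G : I -> T) :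
  (forall i, P i -> congI (F i) (G i)) ->
  congI (\sum_(i <- r | P i) F i) (\sum_(i <- r | P i) G i).
Proof.
move=> H; elim/big_rec2: _ => [|i x y Pi Hxy]; first exact: congI_refl.
exact: congI_add (H _ Pi) Hxy.
Qed.

Lemma hom_sum phi (I : Type) (r : seq I) (P : pred I) (F : I -> T) :
  isHom phi -> (forall i, P i -> inI (F i)) ->
  congI (phi (\sum_(i <- r | P i) F i)) (\sum_(i <- r | P i) phi (F i)).
Proof.
move=> Hphi HF; elim: r => [|x r IH].
  by rewrite !big_nil; have := Hphi.2 0 _ (inIgen (leq0n m)); rewrite !mul0r.
rewrite !big_cons; case: ifP => Px //.
have Hr : inI (\sum_(i <- r | P i) F i) by apply: inI_sum.
apply: congI_trans (Hphi.1 _ _ (HF _ Px) Hr) _.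
exact: congI_add (congI_refl _) IH.
Qed.

Lemma hom_agree phi psi : isHom phi -> isHom psi ->
  (forall i, (i <= m)%N -> congI (phi (mono (a i) (b i))) (psi (mono (a i) (b i)))) ->
  forall p, inI p -> congI (phi p) (psi p).
Proof.
move=> Hphi Hpsi H p [f ->].
have Hgen (i : 'I_m.+1) : (i <= m)%N by rewrite -ltnS.
have Hg (i : 'I_m.+1) : inI (f i * mono (a i) (b i)) by apply/inIM/inIgen.
apply: congI_trans (hom_sum _ Hphi (fun i _ => Hg i)) _.
apply: congI_trans _ (congI_sym (hom_sum _ Hpsi (fun i _ => Hg i))).
apply: congI_sum => i _.
apply: congI_trans (Hphi.2 _ _ (inIgen (Hgen i))) _.
apply: congI_trans _ (congI_sym (Hpsi.2 _ _ (inIgen (Hgen i)))).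
exact/congI_mul/H.
Qed.

Lemma homPos_hom phi : isHomPos phi -> isHom phi.
Proof.
move=> [D [psi [Hpsi Hsum]]]; split.
  move=> p q Hp Hq; apply: congI_trans (Hsum _ (inID Hp Hq)) _.
  have Hadd : congI (\sum_(d < D) psi d (p + q)) (\sum_(d < D) (psi d p + psi d q)).
    by apply: congI_sum => d _; exact: (Hpsi d).1.1.
  apply: congI_trans Hadd _; rewrite big_split /=.
  exact: congI_add (congI_sym (Hsum p Hp)) (congI_sym (Hsum q Hq)).
move=> c p Hp; apply: congI_trans (Hsum _ (inIM c Hp)) _.
have Hmul : congI (\sum_(d < D) psi d (c * p)) (\sum_(d < D) (c * psi d p)).
  by apply: congI_sum => d _; exact: (Hpsi d).1.2.
by apply: congI_trans Hmul _; rewrite -mulr_sumr; apply/congI_mul/congI_sym/Hsum.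
Qed.

Lemma homPos_low_coef phi i (nu : 'X_{1..2}) : isHomPos phi -> (i <= m)%N ->
  (mdeg nu <= a i + b i)%N -> stdm nu -> (phi (mono (a i) (b i)))@_nu = 0.
Proof.
move=> [D [psi [Hpsi Hsum]]] Hi Hdeg Hnu.
rewrite (congI_coef (Hsum _ (inIgen Hi)) Hnu) raddf_sum big1 // => d _.
have Hg : mono (a i) (b i) \is (a i + b i)%N.-homog.
  by rewrite monoX dhomogX; apply/eqP; apply: etrans (mdeg2 _) _; rewrite mexp1 mexp2.
have [q [Hq Hc]] := (Hpsi d).2 _ _ (inIgen Hi) Hg.
apply: etrans (congI_coef Hc Hnu) _; apply: dhomog_nemf_coeff Hq _.
by apply/negP => /eqP E; move: Hdeg; rewrite E; lia.
Qed.

(* W: coordinates w(i,s,t) of candidate values phi(g_i) on standard monomials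
   alpha_1^s alpha_2^t of degree > |g_i|. *)
Definition inW (i s t : nat) : bool :=
  [&& (i <= m)%N, std s t & (a i + b i < s + t)%N].

(* U: one condition for each syzygy between g_j and g_(j+1), in the standard
   monomials of degree > a j + b (j+1). *)
Definition inU (j s t : nat) : bool :=
  [&& (j < m)%N, std s t & (a j + b j.+1 < s + t)%N].

Lemma inW_bound i s t : inW i s t -> [/\ (i < m.+1)%N, (s < box)%N & (t < box)%N].
Proof.
case/and3P => Hi Hs _; have [H1 H2] := std_bound Hs.
by split => //; rewrite /box; lia.
Qed.

Lemma inU_bound i s t : inU i s t -> [/\ (i < m)%N, (s < box)%N & (t < box)%N].
Proof.
case/and3P => Hi Hs _; have [H1 H2] := std_bound Hs.
by split => //; rewrite /box; lia.
Qed.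

Local Notation W := (@V k m.+1 box inW).
Local Notation U := (@V k m box inU).
Local Notation entryW := (@entry k m.+1 box inW).
Local Notation idW := (@idx m.+1 box inW).
Local Notation idU := (@idx m box inU).
Local Notation deltaW := (@delta k m.+1 box inW).
Local Notation deltaU := (@delta k m box inU).

(* the exponent differences of the syzygy alpha_2^(db j) g_j = alpha_1^(da j) g_(j+1) *)
Definition db j := (b j.+1 - b j)%N.
Definition da j := (a j - a j.+1)%N.

(* The coefficient at alpha_1^s alpha_2^t of
   alpha_2^(db j) phi(g_j) - alpha_1^(da j) phi(g_(j+1)). *)
Definition syz_entry (w : W) (j s t : nat) : k :=
  (if (db j <= t)%N then entryW w j s (t - db j) else 0) -
  (if (da j <= s)%N then entryW w j.+1 (s - da j) t else 0).

Definition syz (w : W) : U :=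
  [ffun y => syz_entry w (idU y).1.1 (idU y).1.2 (idU y).2].

Lemma syz_is_linear : linear syz.
Proof.
have lin c w w' j s t : syz_entry (c *: w + w') j s t =
    c * syz_entry w j s t + syz_entry w' j s t.
  by rewrite /syz_entry !entry_lin; case: ifP => _; case: ifP => _; ring.
by move=> c w w'; apply/ffunP => y; rewrite !ffunE lin.
Qed.

HB.instance Definition _ := GRing.isLinear.Build k W U *:%R syz syz_is_linear.

Definition syzL : 'Hom(W, U) := linfun syz.

Lemma syz_entry0 w j s t : syz w = 0 -> inU j s t -> syz_entry w j s t = 0.
Proof.
move=> HA H; have [y Hy] := idx_ex (@inU_bound) H.
by have := congr1 (fun f : U => f y) HA; rewrite !ffunE Hy.
Qed.

Lemma shift2_match i s t j s' t' : inW i s t ->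
  ((db j <= t') && (inW j s' (t' - db j) && ((j, s', t' - db j) == (i, s, t))))%N
  = ((j, s', t') == (i, s, t + db i)%N).
Proof.
move=> H; rewrite !xpair_eqE; apply/idP/idP.
  case/andP => H1 /andP [_ /andP [/andP [/eqP Ej /eqP Es] /eqP Et]].
  by subst; rewrite !eqxx /=; apply/eqP; lia.
case/andP => /andP [/eqP Ej /eqP Es] /eqP Et; subst.
by rewrite addnK leq_addl H !eqxx.
Qed.

Lemma shift1_match i s t j s' t' : inW i s t ->
  ((da j <= s') && (inW j.+1 (s' - da j) t' && ((j.+1, s' - da j, t') == (i, s, t))))%N
  = (if i is i'.+1 then (j, s', t') == (i', s + da i', t)%N else false).
Proof.
move=> H; rewrite !xpair_eqE; case: i H => [|i] H.
  by apply/negP => /andP [_ /andP [_ /andP [/andP [] ]]].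
rewrite !xpair_eqE eqSS; apply/idP/idP.
  case/andP => H1 /andP [_ /andP [/andP [/eqP Ej /eqP Es] /eqP Et]].
  by subst; rewrite !eqxx /= andbT; apply/eqP; lia.
case/andP => /andP [/eqP Ej /eqP Es] /eqP Et; subst.
by rewrite addnK leq_addl H !eqxx.
Qed.

Lemma syz_delta i s t : inW i s t ->
  syz (deltaW i s t) =
  deltaU i s (t + db i) - (if i is i'.+1 then deltaU i' (s + da i') t else 0).
Proof.
move=> H; apply/ffunP => y.
have ifR (c d : bool) : (if c then (d%:R : k) else 0) = (c && d)%:R by case: c.
rewrite !ffunE /syz_entry !(entry_delta k (@inW_bound)) !ifR.
rewrite shift2_match // shift1_match //.
by case: i H => [|i] H; rewrite ?ffunE ?subr0.
Qed.

Lemma syz_img w : syz w \in limg syzL.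
Proof. by rewrite -[syz w]lfunE memv_img ?memvf. Qed.

Lemma deltaU_img_high j s t : (b j.+1 <= t)%N -> deltaU j s t \in limg syzL.
Proof.
elim: j s t => [|j IH] s t Ht.
  case HPj : (inU 0 s t); last by rewrite delta_out ?HPj ?mem0v.
  move: (HPj) => /and3P [Hj Hst Hdeg]; have H01 := hb_inc Hj.
  have HW : inW 0 s (t - db 0).
    by rewrite /inW (std_mono Hst (leqnn _) (leq_subr _ _)) /= /db; lia.
  have E := syz_delta HW; rewrite subnK /db in E; last by lia.
  by rewrite subr0 in E; rewrite -E; apply: syz_img.
case HPj : (inU j.+1 s t); last by rewrite delta_out ?HPj ?mem0v.
move: (HPj) => /and3P [Hj Hst Hdeg]; have H01 := hb_inc Hj.
have HW : inW j.+1 s (t - db j.+1).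
  by rewrite /inW (std_mono Hst (leqnn _) (leq_subr _ _)) /= /db; lia.
have E := syz_delta HW; rewrite subnK in E; last by rewrite /db; lia.
rewrite -(subrK (deltaU j (s + da j) (t - db j.+1)) (deltaU j.+1 s t)) -E.
apply: memvD; first exact: syz_img.
by apply: IH; rewrite /db; lia.
Qed.

Lemma deltaU_img_low d j s t : (m - j)%N = d -> (t < b j.+1)%N ->
  deltaU j s t \in limg syzL.
Proof.
elim: d j s t => [|d IH] j s t Hd Ht.
  by rewrite delta_out ?mem0v // /inU; apply/negP => /and3P [Hj _ _]; lia.
case HPj : (inU j s t); last by rewrite delta_out ?HPj ?mem0v.
move: (HPj) => /and3P [Hj Hst Hdeg]; have H01 := ha_dec Hj.
have HW : inW j.+1 (s - da j) t.
  by rewrite /inW (std_mono Hst (leq_subr _ _) (leqnn _)) /= /da; lia.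
have E := syz_delta HW; rewrite subnK in E; last by rewrite /da; lia.
have -> : deltaU j s t =
          deltaU j.+1 (s - da j) (t + db j.+1) - syz (deltaW j.+1 (s - da j) t).
  by rewrite E opprB addrC subrK.
apply: memvB; last exact: syz_img.
case HPj' : (inU j.+1 (s - da j) (t + db j.+1)); last by rewrite delta_out ?HPj' ?mem0v.
move: HPj' => /and3P [Hj' _ _]; have := hb_inc Hj'.
by move=> H2; apply: IH; rewrite /db; lia.
Qed.

Lemma syz_surjective : limg syzL = fullv.
Proof.
apply/vspaceP => u; rewrite memvf; apply/idP.
rewrite (V_decomp u); apply: memv_suml => x _; apply: memvZ.
case: (leqP (b (idU x).1.1.+1) (idU x).2) => H; first exact: deltaU_img_high.
exact: (@deltaU_img_low (m - (idU x).1.1)).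
Qed.

(* rank-nullity: dim ker syz = dim W - dim U *)
Lemma dim_ker_syz :
  (\dim (lker syzL) + #|{: @Idx m box inU}| = #|{: @Idx m.+1 box inW}|)%N.
Proof. by have := limg_ker_dim syzL fullv; rewrite capfv syz_surjective !dimV. Qed.

(* Given w in ker syz, send a monomial x^xi in I
   to x^(xi - g_i) * (sum_(s,t) w(i,s,t) x^(s,t)), computed coefficientwise
   on the box, where g_i is some generator dividing x^xi, and extend
   linearly.  [phi_coef w i nu xi] is its coefficient at x^nu. *)
Definition phi_coef (w : W) (i : nat) (nu xi : 'X_{1..2}) : k :=
  if ((xi var1 <= nu var1 + a i) && (xi var2 <= nu var2 + b i))%N
  then entryW w i (nu var1 + a i - xi var1) (nu var2 + b i - xi var2) else 0.

Definition pick_gen (xi : 'X_{1..2}) := [pick i : 'I_m.+1 | (gexp i <= xi)%MM].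

Definition phi_mon (w : W) (xi : 'X_{1..2}) : T :=
  if pick_gen xi is Some i then
    \sum_(s < box) \sum_(t < box) phi_coef w i (mexp s t) xi *: 'X_[mexp s t]
  else 0.

Definition Phi (w : W) (p : T) : T := \sum_(xi <- msupp p) p@_xi *: phi_mon w xi.

Lemma Phi_seq w p (r : seq 'X_{1..2}) : uniq r -> {subset msupp p <= r} ->
  Phi w p = \sum_(xi <- r) p@_xi *: phi_mon w xi.
Proof.
move=> Ur Hs.
have -> : \sum_(xi <- r) p@_xi *: phi_mon w xi =
          \sum_(xi <- r | xi \in msupp p) p@_xi *: phi_mon w xi.
  by rewrite [RHS]big_rmcond_in // => xi _ /memN_msupp_eq0 ->; rewrite scale0r.
rewrite /Phi -[RHS]big_filter; apply: perm_big; apply: uniq_perm.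
- exact: msupp_uniq.
- exact: filter_uniq.
by move=> x; rewrite mem_filter; case H: (x \in msupp p) => //=; rewrite Hs.
Qed.

Lemma Phi_is_linear w : linear (Phi w).
Proof.
move=> c p q; set r := undup (msupp p ++ msupp q).
have Ur : uniq r by apply: undup_uniq.
have Sp : {subset msupp p <= r} by move=> x Hx; rewrite mem_undup mem_cat Hx.
have Sq : {subset msupp q <= r} by move=> x Hx; rewrite mem_undup mem_cat Hx orbT.
have Spq : {subset msupp (c *: p + q) <= r}.
  move=> x /msuppD_le; rewrite mem_cat => /orP [/msuppZ_le|]; [exact: Sp|exact: Sq].
rewrite (Phi_seq _ Ur Spq) (Phi_seq _ Ur Sp) (Phi_seq _ Ur Sq).
rewrite scaler_sumr -big_split /=; apply: eq_bigr => xi _.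
by rewrite mcoeffD mcoeffZ scalerDl scalerA.
Qed.

HB.instance Definition _ (w : W) :=
  GRing.isLinear.Build k T T *:%R (Phi w) (Phi_is_linear w).

Lemma PhiZ w (c : k) p : Phi w (c *: p) = c *: Phi w p.
Proof. exact: linearZ. Qed.

Lemma Phi_sum w (I : Type) (r : seq I) (F : I -> T) :
  Phi w (\sum_(i <- r) F i) = \sum_(i <- r) Phi w (F i).
Proof. exact: raddf_sum. Qed.

Lemma Phi_X w xi : Phi w 'X_[xi] = phi_mon w xi.
Proof. by rewrite /Phi msuppX big_seq1 mcoeffX eqxx scale1r. Qed.

Lemma phi_mon_lin c w w' xi :
  phi_mon (c *: w + w') xi = c *: phi_mon w xi + phi_mon w' xi.
Proof.
have coef_lin i nu : phi_coef (c *: w + w') i nu xi =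
    c * phi_coef w i nu xi + phi_coef w' i nu xi.
  by rewrite /phi_coef; case: ifP => _; rewrite ?entry_lin // mulr0 addr0.
rewrite /phi_mon; case: pick_gen => [i|]; last by rewrite scaler0 addr0.
rewrite scaler_sumr -big_split; apply: eq_bigr => s _ /=.
rewrite scaler_sumr -big_split; apply: eq_bigr => t _ /=.
by rewrite coef_lin scalerDl scalerA.
Qed.

Definition PhiAt (p : T) (w : W) : T := Phi w p.

Lemma PhiAt_is_linear p : linear (PhiAt p).
Proof.
move=> c w w'; rewrite /PhiAt /Phi scaler_sumr -big_split.
by apply: eq_bigr => xi _ /=; rewrite phi_mon_lin scalerDr !scalerA mulrC.
Qed.

HB.instance Definition _ (p : T) :=
  GRing.isLinear.Build k W T *:%R (PhiAt p) (PhiAt_is_linear p).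

Lemma phi_mon_coef w xi (nu : 'X_{1..2}) : stdm nu ->
  (phi_mon w xi)@_nu = if pick_gen xi is Some i then phi_coef w i nu xi else 0.
Proof.
move=> Hnu; have [H1 H2] := std_bound Hnu.
rewrite /phi_mon; case: pick_gen => [i|]; last by rewrite mcoeff0.
by rewrite (coef_box (fun s t => phi_coef w i (mexp s t) xi)) -?mexpE // /box; lia.
Qed.

(* Independence of the chosen generator.  For w in ker syz, two adjacent
   generators dividing x^xi give the same coefficients: this is exactly the
   syzygy condition syz_entry w j s t = 0. *)
Lemma phi_coef_adj w j nu xi : syz w = 0 -> (j < m)%N -> (gexp j <= xi)%MM ->
  (gexp j.+1 <= xi)%MM -> stdm nu -> phi_coef w j nu xi = phi_coef w j.+1 nu xi.
Proof.
move=> HA Hj; rewrite !gexp_le => /andP [Ha1 Hb1] /andP [Ha2 Hb2] Hnu.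
have Hda := ha_dec Hj; have Hdb := hb_inc Hj.
rewrite /phi_coef.
set n1 := nu var1; set n2 := nu var2; set x1 := xi var1; set x2 := xi var2.
rewrite -/n1 -/n2 -/x1 -/x2 in Ha1 Hb1 Ha2 Hb2 Hnu.
case HC : ((x1 <= n1 + a j) && (x2 <= n2 + b j.+1))%N; last first.
  case: ifP => H1; first by move: HC H1; lia.
  by case: ifP => H2 //; move: HC H2; lia.
(* below the degree range of U both coefficients lie outside W *)
case HD : (a j + b j.+1 < (n1 + a j - x1) + (n2 + b j.+1 - x2))%N; last first.
  case: ifP => H1; case: ifP => H2; rewrite ?(entry_out w) //;
    rewrite /inW; apply/negP => /and3P [_ _]; move: HC HD H1 H2; lia.
have HinU : inU j (n1 + a j - x1) (n2 + b j.+1 - x2).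
  by rewrite /inU Hj HD andbT /=; apply: std_mono Hnu _ _; lia.
have := syz_entry0 HA HinU; rewrite /syz_entry /db /da.
move/eqP; rewrite subr_eq0 => /eqP.
have I1 : (x2 <= n2 + b j)%N -> (n2 + b j.+1 - x2 - (b j.+1 - b j) = n2 + b j - x2)%N.
  by move: HC; lia.
have I2 : (x1 <= n1 + a j.+1)%N -> (n1 + a j - x1 - (a j - a j.+1) = n1 + a j.+1 - x1)%N.
  by move: HC; lia.
case: ifP => H3; case: ifP => H4; case: ifP => H1; case: ifP => H2 => E //;
  try (by move: HC H1 H2 H3 H4; lia).
- by move: E; rewrite I1 ?I2 //; move: HC H1 H2; lia.
- by move: E; rewrite I1 //; move: HC H1; lia.
- by move: E; rewrite I2 //; move: HC H2; lia.
Qed.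

Lemma phi_coef_indep w nu xi i i' : syz w = 0 -> stdm nu ->
  (i <= m)%N -> (i' <= m)%N -> (gexp i <= xi)%MM -> (gexp i' <= xi)%MM ->
  phi_coef w i nu xi = phi_coef w i' nu xi.
Proof.
move=> HA Hnu.
(* by induction on the distance: the generators between i and i' divide xi *)
have step d : forall j, (j + d <= m)%N -> (gexp j <= xi)%MM ->
    (gexp (j + d) <= xi)%MM -> phi_coef w j nu xi = phi_coef w (j + d) nu xi.
  elim: d => [|d IH] j Hjd Hj Hjd'; first by rewrite addn0.
  have Hd : (gexp (j + d) <= xi)%MM.
    move: Hj Hjd'; rewrite !gexp_le => /andP [H1 H2] /andP [H3 H4].
    rewrite (leq_trans (a_le ha_dec (leq_addr d j) _) H1)
      ?(leq_trans (b_le hb_inc _ _) H4) //; lia.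
  rewrite (IH j _ Hj Hd); last by lia.
  by rewrite addnS; apply: phi_coef_adj => //; [lia | rewrite -addnS].
move=> Hi Hi' H1 H2; case: (leqP i i') => Hii'.
  by have := step (i' - i)%N i; rewrite subnKC //; apply.
by have := step (i - i')%N i'; rewrite subnKC ?(ltnW Hii') // => ->.
Qed.

Lemma pick_genP (xi : 'X_{1..2}) i : (i <= m)%N -> (gexp i <= xi)%MM ->
  exists i0 : 'I_m.+1, pick_gen xi = Some i0 /\ (gexp i0 <= xi)%MM.
Proof.
move=> Hi H; rewrite /pick_gen; case: pickP => [j Hj|Hn]; first by exists j.
by move: (Hn (Ordinal (Hi : (i < m.+1)%N))) => /=; rewrite H.
Qed.

Lemma phi_mon_shift w (u xi : 'X_{1..2}) : syz w = 0 -> ~~ stdm xi ->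
  congI (phi_mon w (u + xi)) ('X_[u] * phi_mon w xi).
Proof.
move=> HA /nstdmP [j Hj Gj]; have [i0 [P0 G0]] := pick_genP Hj Gj.
have Gu : (gexp j <= u + xi)%MM.
  by move: Gj; rewrite !gexp_le !mnmDE => /andP [H1 H2]; apply/andP; split; lia.
have [i1 [P1 G1]] := pick_genP Hj Gu.
apply: coef_congI => nu Hnu.
rewrite phi_mon_coef // P1 mulrC mcoeffMX_cond.
have G0' : (gexp i0 <= u + xi)%MM.
  by move: G0; rewrite !gexp_le !mnmDE => /andP [H1 H2]; apply/andP; split; lia.
rewrite (phi_coef_indep HA Hnu (ltnSE (ltn_ord i1)) (ltnSE (ltn_ord i0)) G1 G0').
move: G0; rewrite gexp_le => /andP [H1 H2].
case: ifP => Hu.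
  have Hnu' : stdm (nu - u)%MM.
    by apply: std_mono Hnu _ _; rewrite mnmBE leq_subr.
  rewrite phi_mon_coef // P0; move: Hu; rewrite lemP => /andP [Hu1 Hu2].
  rewrite /phi_coef !mnmDE !mnmBE.
  case: ifP => C1; case: ifP => C2 //; try (by move: C1 C2; lia).
  by congr (entry _ _ _ _); lia.
rewrite /phi_coef !mnmDE; case: ifP => C1 //.
by move: Hu; rewrite lemP; move: C1 H1 H2; lia.
Qed.

Lemma Phi_hom w : syz w = 0 -> isHom (Phi w).
Proof.
move=> HA; split; first by move=> p q _ _; rewrite raddfD; apply: congI_refl.
move=> c p Hp.
have -> : Phi w (c * p) = \sum_(u <- msupp c) \sum_(xi <- msupp p)
    (c@_u * p@_xi) *: phi_mon w (u + xi)%MM.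
  rewrite {1}(mpolyE c) {1}(mpolyE p) mulr_suml Phi_sum; apply: eq_bigr => u _.
  rewrite mulr_sumr Phi_sum; apply: eq_bigr => xi _.
  by rewrite -scalerAl -scalerAr scalerA -mpolyXD PhiZ Phi_X.
have -> : c * Phi w p = \sum_(u <- msupp c) \sum_(xi <- msupp p)
    (c@_u * p@_xi) *: ('X_[u] * phi_mon w xi).
  rewrite {1}(mpolyE c) mulr_suml /Phi; apply: eq_bigr => u _.
  rewrite mulr_sumr; apply: eq_bigr => xi _.
  by rewrite -scalerAl -scalerAr scalerA.
apply: congI_sum => u _; rewrite big_seq [X in congI _ X]big_seq.
apply: congI_sum => xi Hxi; apply/congI_scale/phi_mon_shift => //.
by apply/negP => Hs; move: Hxi; rewrite mcoeff_msupp (inI_coef_std Hp Hs) eqxx.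
Qed.

(* Grading.  [wdeg d w] keeps the coordinates w(i,s,t) with
   s + t = |g_i| + d + 1; Phi of it raises degrees by exactly d + 1. *)
Definition wdeg (d : nat) (w : W) : W :=
  [ffun x => if ((idW x).1.2 + (idW x).2 == a (idW x).1.1 + b (idW x).1.1 + d.+1)%N
             then w x else 0].

Lemma entry_wdeg d w i s t :
  entryW (wdeg d w) i s t = if (s + t == a i + b i + d.+1)%N then entryW w i s t else 0.
Proof.
case HP : (inW i s t); last by rewrite !entry_out ?HP ?if_same.
have [x Hx] := idx_ex (@inW_bound) HP.
by rewrite !(entry_id _ Hx) ffunE Hx.
Qed.

(* The syzygy conditions are homogeneous, so ker syz is graded. *)
Lemma syz_wdeg d w : syz w = 0 -> syz (wdeg d w) = 0.
Proof.
move=> HA; apply/ffunP => y; rewrite !ffunE.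
move: (idx_P y); move: (idU y) => [[j s] t] /= HP.
have E := syz_entry0 HA HP.
move: HP => /and3P [Hj _ _]; have H1 := ha_dec Hj; have H2 := hb_inc Hj.
move: E; rewrite /syz_entry !entry_wdeg /db /da.
case C1 : (b j.+1 - b j <= t)%N; case C3 : (a j - a j.+1 <= s)%N;
case C2 : (s + (t - (b j.+1 - b j)) == a j + b j + d.+1)%N;
case C4 : (s - (a j - a j.+1) + t == a j.+1 + b j.+1 + d.+1)%N => E;
  rewrite ?subrr ?subr0 ?sub0r ?oppr0 //; try (by move: C1 C2 C3 C4; lia).
all: by move: E; rewrite ?subr0 ?sub0r.
Qed.

Lemma Phi_wdeg_homog d w (p : T) e : p \is e.-homog ->
  Phi (wdeg d w) p \is (e + d.+1)%N.-homog.
Proof.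
move=> Hp; rewrite /Phi big_seq; elim/big_rec: _ => [|xi y Hxi Hy]; first exact: dhomog0.
apply: dhomogD => //; apply: dhomogZ.
have Hxe : mdeg xi = e by apply: (dhomog_mf Hp).
rewrite /phi_mon; case: pick_gen => [i|]; last exact: dhomog0.
elim/big_rec: _ => [|s y2 _ Hy2]; first exact: dhomog0.
apply: dhomogD => //; elim/big_rec: _ => [|t z _ Hz]; first exact: dhomog0.
apply: dhomogD => //.
case E : (phi_coef (wdeg d w) i (mexp s t) xi == 0).
  by rewrite (eqP E) scale0r dhomog0.
apply: dhomogZ; rewrite dhomogX; apply/eqP; apply: etrans (mdeg2 (mexp s t)) _.
move: Hxe; rewrite mdeg2 => Hxe.
move: E; rewrite /phi_coef !mexp1 !mexp2; case: ifP => C; last by rewrite eqxx.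
rewrite entry_wdeg; case: ifP => C2; last by rewrite eqxx.
by move=> _; move: C C2 Hxe; lia.
Qed.

Lemma Phi_wdeg_homDeg d w : syz w = 0 -> isHomDeg d.+1 (Phi (wdeg d w)).
Proof.
move=> HA; split; first exact/Phi_hom/syz_wdeg.
move=> e p _ Hp; exists (Phi (wdeg d w) p); split; last exact: congI_refl.
exact: Phi_wdeg_homog.
Qed.

Lemma wdeg_decomp w : w = \sum_(d < 2 * box) wdeg d w.
Proof.
apply/ffunP => x; rewrite sum_ffunE /wdeg.
under eq_bigr do rewrite ffunE.
move: (idx_P x); move: (idW x) => [[i s] t] /= /and3P [Hi Hs Hdeg].
have [H0 H1] := std_bound Hs.
have Hd : ((s + t - (a i + b i)).-1 < 2 * box)%N by rewrite /box; lia.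
rewrite (bigD1 (Ordinal Hd)) //= big1 ?addr0.
  by case: ifP => // C; move: C Hdeg; lia.
move=> d Hd'; case: ifP => // C; move: Hd'; rewrite -(inj_eq val_inj) /=.
by move: C Hdeg; lia.
Qed.

Lemma PhiAt_sum p (I : Type) (r : seq I) (F : I -> W) :
  Phi (\sum_(i <- r) F i) p = \sum_(i <- r) Phi (F i) p.
Proof. exact: (raddf_sum (PhiAt p)). Qed.

Lemma PhiAt_scale p (c : k) w : Phi (c *: w) p = c *: Phi w p.
Proof. exact: (linearZ_LR (PhiAt p)). Qed.

Lemma Phi_homPos w : syz w = 0 -> isHomPos (Phi w).
Proof.
move=> HA; exists (2 * box)%N, (fun d => Phi (wdeg d w)); split.
  by move=> d; apply: Phi_wdeg_homDeg.
by move=> p _; rewrite {1}(wdeg_decomp w) PhiAt_sum; exact: congI_refl.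
Qed.

Definition gen_coords (phi : T -> T) : W :=
  [ffun x => (phi (mono (a (idW x).1.1) (b (idW x).1.1)))@_(mexp (idW x).1.2 (idW x).2)].

Lemma entry_gen_coords phi i s t : inW i s t ->
  entryW (gen_coords phi) i s t = (phi (mono (a i) (b i)))@_(mexp s t).
Proof.
move=> H; have [x Hx] := idx_ex (@inW_bound) H.
by rewrite (entry_id _ Hx) ffunE Hx.
Qed.

(* The coordinates of a positive-degree homomorphism satisfy the syzygy
   conditions: apply phi to both sides of alpha_2^(db j) g_j = alpha_1^(da j) g_(j+1). *)
Lemma syz_gen_coords phi : isHomPos phi -> syz (gen_coords phi) = 0.
Proof.
move=> Hphi; have hom := homPos_hom Hphi.
apply/ffunP => y; rewrite [RHS]ffunE ffunE.
move: (idx_P y); move: (idU y) => [[j s] t] /= HP.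
move: (HP) => /and3P [Hj Hs Hdeg]; have H1 := ha_dec Hj; have H2 := hb_inc Hj.
have L1 : mono (a j) (b j.+1) = 'X_[mexp 0 (db j)] * mono (a j) (b j).
  by rewrite !monoX -mpolyXD mexpD add0n /db subnK //; lia.
have L2 : mono (a j) (b j.+1) = 'X_[mexp (da j) 0] * mono (a j.+1) (b j.+1).
  by rewrite !monoX -mpolyXD mexpD add0n /da subnK //; lia.
have C1 := hom.2 ('X_[mexp 0 (db j)]) _ (inIgen (ltnW Hj)).
have C2 := hom.2 ('X_[mexp (da j) 0]) _ (inIgen Hj).
rewrite -L1 in C1; rewrite -L2 in C2.
have Hst : stdm (mexp s t) by rewrite /stdm mexp1 mexp2.
have E1 := congI_coef C1 Hst; have E2 := congI_coef C2 Hst.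
rewrite coefXmul leq0n /= in E1; rewrite coefXmul leq0n andbT in E2.
rewrite !subn0 in E1 E2; rewrite /syz_entry.
have T1 : (if (db j <= t)%N then entryW (gen_coords phi) j s (t - db j) else 0) =
          (phi (mono (a j) (b j.+1)))@_(mexp s t).
  rewrite E1; case: ifP => // C; rewrite entry_gen_coords // /inW /db (ltnW Hj) /=.
  rewrite (std_mono Hs (leqnn _) (leq_subr _ _)) /=.
  by move: C; rewrite /db; lia.
have T2 : (if (da j <= s)%N then entryW (gen_coords phi) j.+1 (s - da j) t else 0) =
          (phi (mono (a j) (b j.+1)))@_(mexp s t).
  rewrite E2; case: ifP => // C; rewrite entry_gen_coords // /inW /da Hj /=.
  rewrite (std_mono Hs (leq_subr _ _) (leqnn _)) /=.
  by move: C; rewrite /da; lia.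
by rewrite T1 T2 subrr.
Qed.

Lemma coef_Phi_gen w i (nu : 'X_{1..2}) : syz w = 0 -> (i <= m)%N -> stdm nu ->
  (Phi w (mono (a i) (b i)))@_nu = entryW w i (nu var1) (nu var2).
Proof.
move=> HA Hi Hnu; rewrite monoX Phi_X phi_mon_coef //.
have Hle : (gexp i <= mexp (a i) (b i))%MM by rewrite gexp_le mexp1 mexp2 !leqnn.
have [i0 [P0 G0]] := pick_genP Hi Hle; rewrite P0.
rewrite (phi_coef_indep HA Hnu (ltnSE (ltn_ord i0)) Hi G0 Hle).
by rewrite /phi_coef !mexp1 !mexp2 !leq_addl /= !addnK.
Qed.

Lemma Phi_inj w : syz w = 0 -> (forall p, inI p -> congI (Phi w p) 0) -> w = 0.
Proof.
move=> HA H; apply/ffunP => x; rewrite [RHS]ffunE.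
have Hx := idx_P x.
set i := (val x).1.1; set s := (val x).1.2; set t := (val x).2.
have Ex : idW x = (nat_of_ord i, nat_of_ord s, nat_of_ord t) by [].
rewrite -(entry_id w Ex).
have Hi : (i <= m)%N by case/and3P: Hx.
have Hst : stdm (mexp s t) by rewrite /stdm mexp1 mexp2; case/and3P: Hx.
have := coef_Phi_gen HA Hi Hst; rewrite mexp1 mexp2 => <-.
by rewrite (congI_coef (H _ (inIgen Hi)) Hst) mcoeff0.
Qed.

(* Phi is onto Hom_T(I,T/I)_{>0}: phi agrees with Phi (gen_coords phi),
   since both are homomorphisms with the same standard coefficients on every
   generator (the low-degree ones vanish by homPos_low_coef). *)
Lemma Phi_onto phi : isHomPos phi ->
  exists w, syz w = 0 /\ forall p, inI p -> congI (phi p) (Phi w p).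
Proof.
move=> Hphi; exists (gen_coords phi); have HA := syz_gen_coords Hphi.
split => //; apply: hom_agree (homPos_hom Hphi) (Phi_hom HA) _ => i Hi.
apply: coef_congI => nu Hnu; rewrite (coef_Phi_gen HA Hi Hnu).
case HP : (inW i (nu var1) (nu var2)); first by rewrite entry_gen_coords // -mexpE.
rewrite entry_out ?HP //; apply: homPos_low_coef => //.
have Hs : std (nu var1) (nu var2) := Hnu.
by rewrite mdeg2; move: HP; rewrite /inW Hi Hs /=; lia.
Qed.

Lemma card_W : #|{: @Idx m.+1 box inW}| = sumM m a b.
Proof.
rewrite card_Idx /sumM; apply: eq_bigr => i _.
rewrite -(count_tail ha_last hb_first); apply: eq_bigr => s _; apply: eq_bigr => t _.
by rewrite /inW -ltnS ltn_ord.
Qed.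

Lemma card_U : #|{: @Idx m box inU}| = sumR m a b.
Proof.
rewrite card_Idx /sumR; apply: eq_bigr => i _.
rewrite -(count_tail ha_last hb_first); apply: eq_bigr => s _; apply: eq_bigr => t _.
by rewrite /inU ltn_ord.
Qed.

Lemma hasdim_homPos : @hasdimI k m a b isHomPos (\dim (lker syzL)).
Proof.
set K := lker syzL; set bas := vbasis K.
have inK w : (w \in K) = (syz w == 0) by rewrite memv_ker lfunE.
have HbK (i : 'I_(\dim K)) : syz bas`_i = 0.
  by apply/eqP; rewrite -inK; apply/vbasis_mem/mem_nth; rewrite size_tuple.
exists (fun i => Phi bas`_i); split; [|split].
- by move=> i; apply/Phi_homPos/HbK.
- move=> c H; set v := \sum_(i < \dim K) c i *: bas`_i.
  have Hv : syz v = 0.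
    apply/eqP; rewrite -inK; apply: memv_suml => i _.
    by apply: memvZ; rewrite inK HbK.
  have Hv0 : v = 0.
    apply: (Phi_inj Hv) => p Hp; rewrite /v PhiAt_sum.
    by have := H p Hp; congr congI; apply: eq_bigr => i _; rewrite PhiAt_scale.
  by move: (basis_free (vbasisP K)) => /freeP; apply.
- move=> phi Hphi; have [w [HA Hw]] := Phi_onto Hphi.
  exists (fun i => coord bas i w) => p Hp.
  have HwK : w \in K by rewrite inK HA.
  apply: congI_trans (Hw p Hp) _.
  rewrite {1}(coord_vbasis HwK) PhiAt_sum; apply: congI_sum => i _.
  by rewrite PhiAt_scale; exact: congI_refl.
Qed.

End MonomialIdeal.

Theorem proposition4p1 (k : closedFieldType) (m : nat) (a b : nat -> nat)
  (ha_dec : forall i, (i < m)%N -> (a i.+1 < a i)%N)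
  (ha_last : a m = 0%N)
  (hb_first : b 0%N = 0%N)
  (hb_inc : forall i, (i < m)%N -> (b i < b i.+1)%N) :
  exists n : nat,
    @hasdimI k m a b (@isHomPos k m a b) n /\
    (n%:Z = (sumM m a b)%:Z - (sumR m a b)%:Z)%R.
Proof.
exists (\dim (lker (syzL k m a b))); split.
  exact: hasdim_homPos.
have := dim_ker_syz k ha_dec ha_last hb_first hb_inc.
by rewrite (card_W ha_last hb_first) (card_U ha_last hb_first) => <-; rewrite PoszD addrK.
Qed.
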